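(* Let $G$ be a connected graph and $K\subseteq V(G)$ a nonempty set of vertices inducing a clique in $G$, and let $G_K$ be obtained from $G$ by adding a new vertex $x$ with $N_{G_K}(x)=K$. Let $\mathcal{R}_0=\{T(0,x,v_{\lambda(T)})\mid T\in V(\mathcal{R}(G))\}$ and $\mathcal{R}_1=\{T(\lambda(T)+1,x,v_{\lambda(T)})\mid T\in V(\mathcal{R}(G))\}$. Then $\mathcal{R}_0$ and $\mathcal{R}_1$ each induce a subgraph of $\mathcal{R}(G_K)$ isomorphic to $\mathcal{R}(G)$.
   Context: For a connected graph $G$, a search tree on $G$ is a rooted tree with vertex set $V(G)$ defined recursively: its root is some vertex $r\in V(G)$, and the children of $r$ are the roots of search trees on the connected components of $G-r$. For a rooted tree $T$ and $w\in V(T)$, $T|w$ denotes the subtree rooted at $w$. Let $T$ be a search tree on $G$, let $v$ be a child of $u$ in $T$, and let $p$ be the parent of $u$ (if it exists). The $uv$-rotation transforms $T$ into the search tree $T'$ in which: $u$ is a child of $v$ and $v$ is a child of $p$ (or $v$ is the root if $u$ was the root); every subtree of $u$ in $T$ other than $T|v$ is a subtree of $u$ in $T'$; and every subtree $S$ of $v$ in $T$ is a subtree of $u$ in $T'$ if $u$ is adjacent in $G$ to some vertex of $S$, and a subtree of $v$ in $T'$ otherwise. The rotation graph $\mathcal{R}(G)$ is the graph whose vertices are the search trees on $G$, two being adjacent iff they differ by one rotation. For a rooted tree $T$ with root $r_T$ and $w\in V(T)$, $d_{T,w}$ is the distance from $r_T$ to $w$. For a search tree $T$ on $G$, $\lambda(T)=\max\{d_{T,u}\mid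 u\in K\}$ and $v_{\lambda(T)}$ is the unique vertex of $K$ at depth $\lambda(T)$ (vertices of a clique lie on a common root-to-leaf path). Insertion: for a rooted tree $T$, $v\in V(T)$ with $d=d_{T,v}$ and root-to-$v$ path $a_0,\ldots,a_d=v$, and $x\notin V(T)$: $T(0,x,v)$ has $x$ as new root with $T$ as its only subtree; for $1\le i\le d$, $T(i,x,v)$ subdivides the edge $a_{i-1}a_i$ by $x$; $T(d+1,x,v)$ adds $x$ as a new leaf child of $v$. *)

From mathcomp Require Import all_boot.
Set Implicit Arguments.
Unset Strict Implicit.
Unset Printing Implicit Defensive.

(* A graph is a relation [g : rel V] on a finite vertex type [V]
   (assumed symmetric and irreflexive in the theorem). *)

(* A rooted tree on vertex set V is encoded by its parent function:
   [T w = None] iff w is the root, [T w = Some p] iff p is the parent of w. *)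
Definition ptree (V : finType) := {ffun V -> option V}.

Definition up (V : finType) (T : ptree V) (k : nat) (v : V) : option V :=
  iter k (fun o => obind (fun w => T w) o) (Some v).

Definition rooted_at (V : finType) (T : ptree V) (r : V) : Prop :=
  T r = None /\ forall v, exists k, up T k v = Some r.

Definition desc (V : finType) (T : ptree V) (w : V) : {set V} :=
  [set y | [exists k : 'I_#|V|.+1, up T k y == Some w]].

Definition depth (V : finType) (T : ptree V) (v : V) : nat :=
  find (fun k => up T k.+1 v == None) (iota 0 #|V|).

Definition induced (V : finType) (g : rel V) (S : {set V}) : rel V :=
  [rel a b | [&& g a b, a \in S & b \in S]].

Definition component (V : finType) (g : rel V) (S C : {set V}) : Prop :=
  [/\ C != set0, C \subset S,
      (forall a b, a \in C -> b \in C -> connect (induced g C) a b) &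
      (forall a b, a \in C -> b \in S -> g a b -> b \in C)].

Inductive st_at (V : finType) (g : rel V) (T : ptree V) : V -> Prop :=
  StAt r : (forall c, T c = Some r ->
              component g (desc T r :\ r) (desc T c) /\ st_at g T c) ->
           st_at g T r.

Definition search_tree (V : finType) (g : rel V) (T : ptree V) : Prop :=
  exists r, rooted_at T r /\ st_at g T r.

(* The uv-rotation of T (v a child of u). *)
Definition rotate (V : finType) (g : rel V) (T : ptree V) (u v : V) : ptree V :=
  [ffun w => if w == u then Some v
             else if w == v then T u
             else if (T w == Some v) && [exists y in desc T w, g u y] then Some u
             else T w].

Definition rot_adj (V : finType) (g : rel V) (T1 T2 : ptree V) : Prop :=
  [/\ search_tree g T1, search_tree g T2 &
      exists u v, (T1 v = Some u /\ T2 = rotate g T1 u v) \/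
                  (T2 v = Some u /\ T1 = rotate g T2 u v)].

(* G_K: new vertex x = None with neighbourhood K *)
Definition gK (V : finType) (g : rel V) (K : {set V}) : rel (option V) :=
  fun a b => match a, b with
             | Some a, Some b => g a b
             | None, Some b => b \in K
             | Some a, None => a \in K
             | None, None => false
             end.

(* Insertion T(i, x, v) of x = None, with a_j = up T (d - j) v, d = depth T v. *)
Definition insert (V : finType) (T : ptree V) (i : nat) (v : V) : ptree (option V) :=
  [ffun w => match w with
             | None => if i == 0 then None
                       else omap Some (up T ((depth T v).+1 - i) v)
             | Some w => if (i <= depth T v) && (up T (depth T v - i) v == Some w)
                         then Some None else omap Some (T w)
             end].

Definition lam (V : finType) (K : {set V}) (T : ptree V) : nat :=
  \max_(u in K) depth T u.

(* R_0 and R_1; v ranges over the vertex v_lambda(T) of K of depth lambda(T) *)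
Definition R0 (V : finType) (g : rel V) (K : {set V}) (T' : ptree (option V)) : Prop :=
  exists T, search_tree g T /\
    exists v, [/\ v \in K, depth T v = lam K T & T' = insert T 0 v].

Definition R1 (V : finType) (g : rel V) (K : {set V}) (T' : ptree (option V)) : Prop :=
  exists T, search_tree g T /\
    exists v, [/\ v \in K, depth T v = lam K T & T' = insert T (lam K T).+1 v].

Definition induces_copy (V W : finType) (g : rel V) (h : rel W)
    (R : ptree W -> Prop) : Prop :=
  (forall T', R T' -> search_tree h T') /\
  exists f : ptree V -> ptree W,
    [/\ forall T, search_tree g T -> R (f T),
        forall T1 T2, search_tree g T1 -> search_tree g T2 -> f T1 = f T2 -> T1 = T2,
        forall T', R T' -> exists2 T, search_tree g T & f T = T' &
        forall T1 T2, search_tree g T1 -> search_tree g T2 ->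
          (rot_adj g T1 T2 <-> rot_adj h (f T1) (f T2))].

From mathcomp Require Import all_boot zify.
Set Implicit Arguments. Unset Strict Implicit. Unset Printing Implicit Defensive.

(* Both families are images of the search trees on G under injective maps that
   commute with rotations: [add_root] puts x above the root, [add_leaf] hangs x
   as a leaf below the deepest vertex of K, which lies below all of K because K
   is a clique and every edge of G joins an ancestor to a descendant.  The
   uv-rotation of T corresponds to the rotation at (Some u, Some v) of the lifted
   tree: the subtrees that move to u are the same up to x, since x is adjacent
   only to K and every vertex of K is an ancestor of the deepest one; the parent
   of x changes from v to u exactly when v was the deepest vertex and u is in K.
   A rotation at an edge through x would make x a non-root, resp. a non-leaf, so
   it leads out of the image. *)

Lemma find_iota (p : pred nat) n k :
  k < n -> p k -> (forall j, j < k -> ~~ p j) -> find p (iota 0 n) = k.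
Proof.
move=> lt_kn pk before_k; case: findP => [/hasP[]|i].
  by exists k; rewrite ?mem_iota.
rewrite size_iota => lt_in /(_ 0); rewrite nth_iota // add0n => pi before_i.
case: (ltngtP i k) => // [/before_k|lt_ki]; first by rewrite pi.
by have := before_i 0 k lt_ki; rewrite nth_iota ?add0n ?pk.
Qed.

Section Ancestors.
Variables (V : finType) (T : ptree V).

Lemma upS k v : up T k.+1 v = obind T (up T k v).
Proof. by []. Qed.

Lemma upD m n v : up T (m + n) v = obind (up T m) (up T n v).
Proof.
elim: m => [|m IH]; first by case: (up T n v).
by rewrite addSn upS IH; case: (up T n v).
Qed.

Lemma upSr k v : up T k.+1 v = obind (up T k) (T v).
Proof. by rewrite -addn1 upD. Qed.

Lemma up_none_mono k m v : up T k v = None -> k <= m -> up T m v = None.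
Proof. by move=> Hk /subnK <-; rewrite upD Hk. Qed.

Lemma up_sub k1 k2 z a c : up T k1 z = Some a -> up T k2 z = Some c -> k1 <= k2 ->
  up T (k2 - k1) a = Some c.
Proof. by move=> H1 H2 /subnK E; rewrite -H2 -{2}E upD H1. Qed.

(* The parent map acts on [option V], which has [#|V|.+1] points. *)
Lemma up_bounded k v y : up T k v = y -> exists2 k', k' <= #|V| & up T k' v = y.
Proof.
pose F (o : option V) := obind T o.
have upE n : up T n v = iter n F (Some v) by [].
move=> Hk; have Hc : fconnect F (Some v) y by rewrite -Hk upE; apply: fconnect_iter.
exists (findex F (Some v) y); last by rewrite upE iter_findex.
rewrite -ltnS; apply: leq_trans (findex_max Hc) _.
by rewrite /order -card_option max_card.
Qed.

Lemma descP w y : reflect (exists k, up T k y = Some w) (y \in desc T w).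
Proof.
rewrite inE; apply: (iffP existsP) => [[k /eqP]|[k /up_bounded[k' Hk' Hup]]].
  by exists k.
by exists (Ordinal (Hk' : k' < #|V|.+1)); apply/eqP.
Qed.

Lemma desc_refl w : w \in desc T w.
Proof. by apply/descP; exists 0. Qed.

Lemma desc_parent a p : T a = Some p -> a \in desc T p.
Proof. by move=> Hp; apply/descP; exists 1. Qed.

Lemma desc_trans a b c : a \in desc T b -> b \in desc T c -> a \in desc T c.
Proof.
move=> /descP[k1 H1] /descP[k2 H2]; apply/descP; exists (k2 + k1).
by rewrite upD H1.
Qed.

Lemma desc_child a c : a \in desc T c -> a != c ->
  exists2 d, T d = Some c & a \in desc T d.
Proof.
move=> /descP[[|k]]; first by move=> [->]; rewrite eqxx.
rewrite upS; case Hd: (up T k a) => [d|] //= Hdc _.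
by exists d => //; apply/descP; exists k.
Qed.

Lemma desc_total z a b : z \in desc T a -> z \in desc T b ->
  a \in desc T b \/ b \in desc T a.
Proof.
move=> /descP[ka Ha] /descP[kb Hb].
case: (leqP ka kb) => [le|/ltnW le]; [left|right]; apply/descP.
  by exists (kb - ka); apply: up_sub Ha Hb le.
by exists (ka - kb); apply: up_sub Hb Ha le.
Qed.

End Ancestors.

Section Rooted.
Variables (V : finType) (T : ptree V) (r : V).
Hypothesis rootT : rooted_at T r.

Lemma root_parent : T r = None.
Proof. by case: rootT. Qed.

Lemma parent_none w : T w = None -> w = r.
Proof.
move=> Hw; case: rootT => _ /(_ w) [[|k]]; first by case.
by rewrite upSr Hw.
Qed.

Lemma depth_spec k v : up T k v = Some r -> depth T v = k.
Proof.
move=> Hk; have Hk1 : up T k.+1 v = None by rewrite upS Hk /= root_parent.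
apply: find_iota; last 2 first.
- exact/eqP.
- by move=> j lt_jk; apply/eqP => /up_none_mono /(_ lt_jk); rewrite Hk.
have [k' le_k' Hk'] := up_bounded Hk1.
case: (ltnP k k') => [lt_kk'|le_k'k]; first exact: leq_trans lt_kk' le_k'.
by have := up_none_mono Hk' le_k'k; rewrite Hk.
Qed.

Lemma up_depth v : up T (depth T v) v = Some r.
Proof. by case: rootT => _ /(_ v) [k Hk]; rewrite (depth_spec Hk). Qed.

Lemma depth_up k x y : up T k x = Some y -> depth T x = depth T y + k.
Proof. by move=> H; apply: depth_spec; rewrite upD H /= up_depth. Qed.

Lemma depth_parent x y : T x = Some y -> depth T x = (depth T y).+1.
Proof. by move=> H; rewrite (@depth_up 1 x y H) addn1. Qed.

Lemma desc_root y : y \in desc T r.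
Proof. by apply/descP; case: rootT => _ /(_ y). Qed.

Lemma depth_desc a b : a \in desc T b -> depth T b <= depth T a.
Proof. by move=> /descP[k /depth_up ->]; apply: leq_addr. Qed.

Lemma depth_desc_lt a b : a \in desc T b -> a != b -> depth T b < depth T a.
Proof.
move=> /descP[[|k] H]; first by move: H => [->]; rewrite eqxx.
by rewrite (depth_up H) addnS ltnS leq_addr.
Qed.

Lemma desc_antisym a b : a \in desc T b -> b \in desc T a -> a = b.
Proof.
move=> ab ba; apply/eqP/negPn/negP => nab.
by have := depth_desc_lt ab nab; rewrite ltnNge depth_desc.
Qed.

End Rooted.

Section SearchTree.
Variables (V : finType) (g : rel V) (T : ptree V).

(* The recursive occurrence of [st_at] sits under [/\], so the principle
   generated by Coq has no induction hypothesis. *)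
Lemma st_at_rec (P : V -> Prop) :
  (forall c, (forall d, T d = Some c ->
                component g (desc T c :\ c) (desc T d) /\ P d) -> P c) ->
  forall c, st_at g T c -> P c.
Proof.
move=> IH; fix rec 2 => c [{}c Hc]; apply: IH => d Hd.
by case: (Hc d Hd) => Hcomp Hst; split; last exact: rec Hst.
Qed.

Lemma st_at_edge c a b : st_at g T c -> a \in desc T c -> b \in desc T c -> g a b ->
  a \in desc T b \/ b \in desc T a.
Proof.
move=> Hc; elim/st_at_rec: c / Hc a b => c IH a b ac bc gab.
have [->|nac] := eqVneq a c; first by right.
have [->|nbc] := eqVneq b c; first by left.
have [d Hd ad] := desc_child ac nac.
have [[_ _ _ closedC] IHd] := IH d Hd.
by apply: (IHd _ _ ad _ gab); apply: closedC gab; rewrite // in_setD1 nbc.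
Qed.

Lemma search_tree_edge a b : search_tree g T -> g a b ->
  a \in desc T b \/ b \in desc T a.
Proof.
by case=> r [rootT Hr] gab; apply: st_at_edge Hr _ _ gab; exact: (desc_root rootT).
Qed.

End SearchTree.

Lemma up_congr (V : finType) (T1 T2 : ptree V) k z :
  (forall j b, j < k -> up T1 j z = Some b -> T2 b = T1 b) -> up T2 k z = up T1 k z.
Proof.
elim: k => // k IH fixed; rewrite !upS IH => [|j b lt_jk]; last by apply: fixed; lia.
by case Hb: (up T1 k z) => [b|] //=; apply: fixed Hb.
Qed.

Lemma desc_proper_parent (V : finType) (T : ptree V) a y : y \in desc T a -> y != a ->
  exists2 p, T y = Some p & p \in desc T a.
Proof.
move=> /descP[[|k]]; first by move=> [->]; rewrite eqxx.
by rewrite upSr; case: (T y) => // p Hp _; exists p => //; apply/descP; exists k.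
Qed.

Section Rotation.
Variables (V : finType) (g : rel V) (T : ptree V) (r u v : V).
Hypotheses (rootT : rooted_at T r) (Tv : T v = Some u).
Local Notation T' := (rotate g T u v).

Let depth_v : depth T v = (depth T u).+1.
Proof. exact: (depth_parent rootT Tv). Qed.

Lemma rotate_u : T' u = Some v.
Proof. by rewrite ffunE eqxx. Qed.

Lemma rotate_v : T' v = T u.
Proof.
have nvu : v != u by apply/eqP => Evu; move: depth_v; rewrite Evu; lia.
by rewrite ffunE (negbTE nvu) eqxx.
Qed.

Lemma rotate_other b : b != u -> b != v -> T b != Some v -> T' b = T b.
Proof. by move=> /negbTE bu /negbTE bv /negbTE Tb; rewrite ffunE bu bv Tb. Qed.

Lemma rotate_child c : T c = Some v ->
  T' c = if [exists y in desc T c, g u y] then Some u else Some v.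
Proof.
move=> Tc; have := depth_parent rootT Tc; rewrite depth_v => depth_c.
have /negbTE cu : c != u by apply/eqP => Ecu; move: depth_c; rewrite Ecu; lia.
have /negbTE cv : c != v by apply/eqP => Ecv; move: depth_c; rewrite Ecv; lia.
by rewrite ffunE cu cv Tc eqxx /=; case: ifP.
Qed.

(* Only the parents of [u], [v] and of the children of [v] can change. *)
Lemma rotate_fixed b : (depth T b < depth T u) || ((depth T v).+1 < depth T b) ->
  T' b = T b.
Proof.
move=> depth_b; apply: rotate_other; apply/eqP => Eb.
- by move: depth_b; rewrite Eb depth_v; lia.
- by move: depth_b; rewrite Eb depth_v; lia.
- by move: depth_b; rewrite (depth_parent rootT Eb) depth_v; lia.
Qed.

Lemma desc_rotate_shallow p a : depth T p < depth T u -> p \in desc T a -> p \in desc T' a.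
Proof.
move=> depth_p /descP[k Hk]; apply/descP; exists k; rewrite -Hk.
apply: up_congr => j b _ Hb; apply: rotate_fixed.
by move: depth_p; rewrite (depth_up rootT Hb); lia.
Qed.

Lemma desc_rotate_deep z a : depth T v < depth T a -> z \in desc T a -> z \in desc T' a.
Proof.
move=> depth_a /descP[k Hk]; apply/descP; exists k; rewrite -Hk.
apply: up_congr => j b lt_jk Hb; apply: rotate_fixed.
have := depth_up rootT Hk; rewrite (depth_up rootT Hb); lia.
Qed.

Lemma desc_rotate_notin z a : z \notin desc T v -> z \in desc T a -> z \in desc T' a.
Proof.
move=> zv /descP[k]; elim: k a => [|k IH] a; first by move=> [<-]; apply: desc_refl.
rewrite upS; case Hb: (up T k z) => [b|] //= Tb.
have nbv : b != v by apply: contraNneq zv => <-; apply/descP; exists k.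
have nTb : T b != Some v.
  by apply: contraNneq zv => Tbv; apply/descP; exists k.+1; rewrite upS Hb.
apply: desc_trans (IH b Hb) _; have [Ebu|nbu] := eqVneq b u.
  rewrite Ebu; apply: desc_trans (desc_parent rotate_u) _.
  by apply: desc_parent; rewrite rotate_v -Ebu.
by apply: desc_parent; rewrite rotate_other.
Qed.

Lemma desc_rotate_v z : z \in desc T u -> z \in desc T' v.
Proof.
move=> zu; have [zv|zNv] := boolP (z \in desc T v); last first.
  exact: desc_trans (desc_rotate_notin zNv zu) (desc_parent rotate_u).
have [->|nzv] := eqVneq z v; first exact: desc_refl.
have [c Tc zc] := desc_child zv nzv.
have depth_c : depth T v < depth T c by rewrite (depth_parent rootT Tc).
apply: desc_trans (desc_rotate_deep depth_c zc) _.
have := rotate_child Tc; case: ifP => _ T'c; last exact: desc_parent.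
exact: desc_trans (desc_parent T'c) (desc_parent rotate_u).
Qed.

Lemma desc_rotate_moved c z : T c = Some v -> [exists y in desc T c, g u y] ->
  z \in desc T c -> z \in desc T' u.
Proof.
move=> Tc moved zc; have depth_c : depth T v < depth T c by rewrite (depth_parent rootT Tc).
apply: desc_trans (desc_rotate_deep depth_c zc) _.
by rewrite desc_parent // rotate_child // moved.
Qed.

Lemma desc_rotate_other a z : a != u -> a != v -> z \in desc T a -> z \in desc T' a.
Proof.
move=> nau nav za; have [zv|zNv] := boolP (z \in desc T v); last exact: desc_rotate_notin.
case: (desc_total za zv) => [av|va].
  exact: desc_rotate_deep (depth_desc_lt rootT av nav) za.
rewrite eq_sym in nau; rewrite eq_sym in nav.
have [w] := desc_proper_parent va nav; rewrite Tv => -[<-] ua.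
have [p Tu pa] := desc_proper_parent ua nau.
have depth_p : depth T p < depth T u by rewrite (depth_parent rootT Tu).
apply: desc_trans (desc_rotate_v (desc_trans zv (desc_parent Tv))) _.
apply: desc_trans (desc_rotate_shallow depth_p pa).
by apply: desc_parent; rewrite rotate_v.
Qed.

End Rotation.

(* The vertex v_lambda(T) of the paper; [None] only when [K] is empty. *)
Definition deepest (V : finType) (K : {set V}) (T : ptree V) : option V :=
  [pick u in K | depth T u == lam K T].

Section Deepest.
Variables (V : finType) (g : rel V) (K : {set V}).
Hypotheses (K_ne : K != set0) (K_clique : {in K &, forall a b, a != b -> g a b}).
Implicit Types (T : ptree V).

Lemma depth_le_lam T a : a \in K -> depth T a <= lam K T.
Proof. exact: leq_bigmax_cond. Qed.

Lemma deepestP T z : deepest K T = Some z -> z \in K /\ depth T z = lam K T.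
Proof. by rewrite /deepest; case: pickP => // w /andP[wK /eqP dw] [<-]. Qed.

Lemma deepest_exists T : exists z, deepest K T = Some z.
Proof.
have [a aK lamE] : {a | a \in K & lam K T = depth T a}.
  by apply: eq_bigmax_cond; rewrite card_gt0.
rewrite /deepest; case: pickP => [z _|none]; first by exists z.
by have := none a; rewrite aK lamE eqxx.
Qed.

Lemma clique_depth_inj T : search_tree g T -> {in K &, injective (depth T)}.
Proof.
move=> stT a b aK bK dab; apply/eqP/negPn/negP => nab.
have [r [rootT _]] := stT.
case: (search_tree_edge stT (K_clique aK bK nab)) => [ab|ba].
  by have := depth_desc_lt rootT ab nab; rewrite dab ltnn.
by have := depth_desc_lt rootT ba (contra_neq esym nab); rewrite dab ltnn.
Qed.

Lemma deepest_eq T v : search_tree g T -> v \in K -> depth T v = lam K T ->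
  deepest K T = Some v.
Proof.
move=> stT vK dv; have [z Hz] := deepest_exists T; have [zK dz] := deepestP Hz.
by rewrite Hz (clique_depth_inj stT zK vK) // dz dv.
Qed.

Lemma desc_deepest T z a : search_tree g T -> deepest K T = Some z -> a \in K ->
  z \in desc T a.
Proof.
move=> stT Hz aK; have [zK dz] := deepestP Hz; have [r [rootT _]] := stT.
have [->|naz] := eqVneq a z; first exact: desc_refl.
case: (search_tree_edge stT (K_clique aK zK naz)) => // az.
by have := depth_desc_lt rootT az naz; rewrite dz ltnNge depth_le_lam.
Qed.

Lemma deepest_char T z : search_tree g T -> z \in K ->
  (forall a, a \in K -> z \in desc T a) -> deepest K T = Some z.
Proof.
move=> stT zK below_all; have [w Hw] := deepest_exists T; have [wK _] := deepestP Hw.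
have [r [rootT _]] := stT; rewrite Hw; congr Some.
exact: (desc_antisym rootT (desc_deepest stT Hw zK) (below_all w wK)).
Qed.

(* After the rotation [u] hangs below [v], so it takes over from [v] as the
   deepest vertex of [K] when it belongs to [K]. *)
Lemma deepest_rotate T u v z : search_tree g T -> T v = Some u ->
  search_tree g (rotate g T u v) -> deepest K T = Some z ->
  deepest K (rotate g T u v) = Some (if (z == v) && (u \in K) then u else z).
Proof.
move=> stT Tv stT' Hz; have [zK _] := deepestP Hz; have [r [rootT _]] := stT.
have depth_v := depth_parent rootT Tv.
apply: deepest_char stT' _ _ => [|a aK]; first by case: ifP => // /andP[].
have za := desc_deepest stT Hz aK.
have [Ezv|nzv] := eqVneq z v.
  rewrite /= Ezv in za *; have [->|nav] := eqVneq a v.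
    by case: ifP => _; [apply: desc_parent; apply: rotate_u | apply: desc_refl].
  have [Eau|nau] := eqVneq a u; first by rewrite -Eau aK desc_refl.
  have va := desc_rotate_other g rootT Tv nau nav za.
  by case: ifP => _ //; apply: desc_trans (desc_parent (rotate_u g T u v)) va.
rewrite /=; have [Eav|nav] := eqVneq a v.
  rewrite Eav in za *; exact: (desc_rotate_v g rootT Tv (desc_trans za (desc_parent Tv))).
have [Eau|nau] := eqVneq a u; last exact: (desc_rotate_other g rootT Tv nau nav za).
rewrite Eau in aK za *; have [zv|zNv] := boolP (z \in desc T v); last first.
  exact: (desc_rotate_notin g rootT Tv zNv za).
have [c Tc zc] := desc_child zv nzv.
apply: (desc_rotate_moved rootT Tv Tc _ zc); apply/existsP; exists z; rewrite zc /=.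
apply: K_clique => //; apply/eqP => Euz.
by move: (depth_desc rootT zv); rewrite -Euz depth_v ltnn.
Qed.

End Deepest.

Section CopyCriterion.
Variables (V : finType) (g : rel V) (h : rel (option V)).
Variables (R : ptree (option V) -> Prop) (F : ptree V -> ptree (option V)).
Hypothesis R_image : forall T', R T' <-> exists2 T, search_tree g T & F T = T'.
Hypothesis F_search : forall T, search_tree g T -> search_tree h (F T).
Hypothesis F_parent : forall T u v, F T (Some v) = Some (Some u) <-> T v = Some u.
Hypothesis F_inj : forall T1 T2, (forall w, F T1 (Some w) = F T2 (Some w)) -> T1 = T2.
Hypothesis F_rotate_Some : forall T u v w, search_tree g T -> T v = Some u ->
  F (rotate g T u v) (Some w) = rotate h (F T) (Some u) (Some v) (Some w).
Hypothesis F_rotate_None : forall T u v, search_tree g T -> T v = Some u ->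
  search_tree g (rotate g T u v) ->
  F (rotate g T u v) None = rotate h (F T) (Some u) (Some v) None.
Hypothesis F_rotate_Some_edge : forall T1 T2 u' v', F T1 v' = Some u' ->
  F T2 = rotate h (F T1) u' v' -> exists u v, u' = Some u /\ v' = Some v.

Lemma F_rotate T1 T2 u v : search_tree g T1 -> search_tree g T2 -> T1 v = Some u ->
  T2 = rotate g T1 u v -> F T2 = rotate h (F T1) (Some u) (Some v).
Proof.
move=> st1 st2 T1v T2E; rewrite T2E in st2 *; apply/ffunP => -[w|].
  exact: F_rotate_Some.
exact: F_rotate_None.
Qed.

Lemma F_rotate_inv T1 T2 u' v' : search_tree g T1 -> F T1 v' = Some u' ->
  F T2 = rotate h (F T1) u' v' -> exists u v, T1 v = Some u /\ T2 = rotate g T1 u v.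
Proof.
move=> st1 T1v' T2E; have [u [v [Eu Ev]]] := F_rotate_Some_edge T1v' T2E; subst u' v'.
have T1v : T1 v = Some u by apply/F_parent.
by exists u, v; split=> //; apply: F_inj => w; rewrite T2E F_rotate_Some.
Qed.

Lemma lift_induces_copy : induces_copy g h R.
Proof.
split=> [T' /R_image[T stT <-]|]; first exact: F_search.
exists F; split.
- by move=> T stT; apply/R_image; exists T.
- by move=> T1 T2 _ _ E; apply: F_inj => w; rewrite E.
- by move=> T' /R_image.
move=> T1 T2 st1 st2; split=> -[_ _ [u [v [[Tv E]|[Tv E]]]]].
- split; try exact: F_search; exists (Some u), (Some v); left.
  by split; [apply/F_parent | apply: F_rotate].
- split; try exact: F_search; exists (Some u), (Some v); right.
  by split; [apply/F_parent | apply: F_rotate].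
- by split=> //; have [u0 [v0 E0]] := F_rotate_inv st1 Tv E; exists u0, v0; left.
- by split=> //; have [u0 [v0 E0]] := F_rotate_inv st2 Tv E; exists u0, v0; right.
Qed.

End CopyCriterion.

Lemma homo_connect (A B : finType) (e : rel A) (e' : rel B) (f : A -> B) :
  {homo f : x y / e x y >-> e' x y} -> {homo f : x y / connect e x y >-> connect e' x y}.
Proof.
move=> fe x y /connectP[p pth ->]; apply/connectP.
by exists (map f p); [apply: homo_path pth | rewrite last_map].
Qed.

Section ComponentsGK.
Variables (V : finType) (g : rel V) (K : {set V}).
Variables (S C : {set V}) (S' C' : {set option V}).
Hypotheses (compC : component g S C) (S'E : Some @^-1: S' = S) (C'E : Some @^-1: C' = C).

Let memS y : (Some y \in S') = (y \in S). Proof. by rewrite -S'E inE. Qed.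
Let memC y : (Some y \in C') = (y \in C). Proof. by rewrite -C'E inE. Qed.

Let connect_Some a b : a \in C -> b \in C ->
  connect (induced (gK g K) C') (Some a) (Some b).
Proof.
case: compC => _ _ conn _ aC bC; apply: homo_connect (conn a b aC bC) => x y.
by rewrite /induced /= !memC.
Qed.

Lemma component_gK : None \notin C' -> (None \in S' -> [disjoint C & K]) ->
  component (gK g K) S' C'.
Proof.
case: compC => /set0Pn[c cC] sub _ closedC NC away; split.
- by apply/set0Pn; exists (Some c); rewrite memC.
- by apply/subsetP => -[y|]; rewrite ?(negbTE NC) // memC memS => /(subsetP sub).
- by move=> [a|] [b|]; rewrite ?(negbTE NC) // !memC; apply: connect_Some.
move=> [a|] [b|]; rewrite ?(negbTE NC) // memC ?memS ?memC; first exact: closedC.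
by move=> aC /away /disjointFr /(_ aC) /= ->.
Qed.

Lemma component_gK_apex v : None \in S' -> None \in C' -> v \in C -> v \in K ->
  {in S, forall b, b \in K -> b \in C} -> component (gK g K) S' C'.
Proof.
case: compC => _ sub _ closedC NS NC vC vK KC; split.
- by apply/set0Pn; exists None.
- by apply/subsetP => -[y|] //; rewrite memC memS => /(subsetP sub).
- have edge_v : induced (gK g K) C' (Some v) None by rewrite /induced /= vK memC vC NC.
  have edge_v' : induced (gK g K) C' None (Some v) by rewrite /induced /= vK memC vC NC.
  move=> [a|] [b|]; rewrite ?memC => aC bC.
  + exact: connect_Some.
  + exact: connect_trans (connect_Some aC vC) (connect1 edge_v).
  + exact: connect_trans (connect1 edge_v') (connect_Some vC bC).
  + exact: connect0.
move=> [a|] [b|]; rewrite ?memC ?memS //=; first exact: closedC.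
by move=> _ bS bK; apply: KC.
Qed.

End ComponentsGK.

Lemma component_setT (V : finType) (g : rel V) (r : V) :
  (forall a b, connect g a b) -> component g setT setT.
Proof.
move=> conn; split=> //; first by apply/set0Pn; exists r.
move=> a b _ _; apply: homo_connect (conn a b) => x y gxy.
by rewrite /induced /= gxy !inE.
Qed.

Lemma preimset_Some_setD1 (V : finType) (A : {set option V}) a :
  Some @^-1: (A :\ Some a) = (Some @^-1: A) :\ a.
Proof. by apply/setP => y; rewrite !inE (inj_eq (@Some_inj _)). Qed.

Section AddRoot.
Variables (V : finType) (g : rel V) (K : {set V}).
Implicit Types (T : ptree V).

Definition add_root T : ptree (option V) :=
  [ffun o => if o is Some w then Some (T w) else None].

Lemma add_root_Some T w : add_root T (Some w) = Some (T w).
Proof. by rewrite ffunE. Qed.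

Lemma add_root_None T : add_root T None = None.
Proof. by rewrite ffunE. Qed.

Lemma up_add_root T k y a :
  up (add_root T) k (Some y) = Some (Some a) <-> up T k y = Some a.
Proof.
elim: k a => [|k IH] a; first by split=> -[->].
rewrite !upS; case Hb: (up T k y) => [b|] /=.
  by rewrite (proj2 (IH b) Hb) /= add_root_Some; split=> [[]|->].
split=> //; case Hb': (up (add_root T) k (Some y)) => [[b|]|] //=.
  by move/IH: Hb'; rewrite Hb.
by rewrite add_root_None.
Qed.

Lemma mem_desc_add_root T w y : (Some y \in desc (add_root T) (Some w)) = (y \in desc T w).
Proof. by apply/descP/descP => -[k Hk]; exists k; apply/up_add_root. Qed.

Lemma preim_desc_add_root T w : Some @^-1: desc (add_root T) (Some w) = desc T w.
Proof. by apply/setP => y; rewrite inE mem_desc_add_root. Qed.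

Lemma None_notin_desc_add_root T w : None \notin desc (add_root T) (Some w).
Proof. by apply/descP => -[[|k]] //; rewrite upSr add_root_None. Qed.

Lemma add_root_rooted T r : rooted_at T r -> rooted_at (add_root T) None.
Proof.
case=> Tr reach; split=> [|[w|]]; [exact: add_root_None | | by exists 0].
have [k Hk] := reach w; exists k.+1.
by rewrite upS (proj2 (up_add_root T k w r) Hk) /= add_root_Some Tr.
Qed.

Lemma add_root_st_at T c : st_at g T c -> st_at (gK g K) (add_root T) (Some c).
Proof.
elim/st_at_rec => {}c IH; constructor=> -[d|]; last by rewrite add_root_None.
rewrite add_root_Some => -[/IH[compd std]]; split=> //.
apply: component_gK compd _ _ _ _ => //.
- by rewrite preimset_Some_setD1 preim_desc_add_root.
- exact: preim_desc_add_root.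
- exact: None_notin_desc_add_root.
by rewrite in_setD1 (negbTE (None_notin_desc_add_root T c)) andbF.
Qed.

Lemma add_root_search T : (forall a b, connect g a b) -> search_tree g T ->
  search_tree (gK g K) (add_root T).
Proof.
move=> conn [r [rootT str]]; have rootT' := add_root_rooted rootT.
exists None; split; first exact: rootT'.
constructor=> -[d|]; last by rewrite add_root_None.
rewrite add_root_Some => -[/(parent_none rootT)->].
split; last exact: add_root_st_at.
apply: component_gK (component_setT r conn) _ _ _ _ => //.
- by apply/setP => y; rewrite in_setT inE in_setD1 (desc_root rootT').
- by apply/setP => y; rewrite preim_desc_add_root in_setT (desc_root rootT).
- exact: None_notin_desc_add_root.
by rewrite in_setD1 eqxx.
Qed.

Lemma existsb_desc_add_root T u w :
  [exists y in desc (add_root T) (Some w), gK g K (Some u) y] =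
  [exists y in desc T w, g u y].
Proof.
apply/existsP/existsP => [[[y|]]|[y]].
- by rewrite mem_desc_add_root => Hy; exists y.
- by rewrite (negbTE (None_notin_desc_add_root T w)).
- by exists (Some y); rewrite mem_desc_add_root.
Qed.

Lemma rotate_add_root T u v :
  add_root (rotate g T u v) = rotate (gK g K) (add_root T) (Some u) (Some v).
Proof.
apply/ffunP => -[w|]; rewrite !ffunE //= existsb_desc_add_root !(inj_eq (@Some_inj _)).
by case: ifP => // _; case: ifP => // _; case: ifP.
Qed.

Lemma insert_0 T r v : rooted_at T r -> insert T 0 v = add_root T.
Proof.
move=> rootT; apply/ffunP => -[w|]; rewrite !ffunE //= subn0 (up_depth rootT).
have [<-|nrw] := eqVneq r w; first by rewrite eqxx (root_parent rootT).
rewrite (inj_eq (@Some_inj _)) (negbTE nrw); case Tw: (T w) => [p|] //=.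
by move: nrw; rewrite (parent_none rootT Tw) eqxx.
Qed.

End AddRoot.

Definition add_leaf (V : finType) (K : {set V}) (T : ptree V) : ptree (option V) :=
  [ffun o => if o is Some w then omap Some (T w) else omap Some (deepest K T)].

Section AddLeaf.
Variables (V : finType) (g : rel V) (K : {set V}).
Hypotheses (K_ne : K != set0) (K_clique : {in K &, forall a b, a != b -> g a b}).
Implicit Types (T : ptree V).

Lemma add_leaf_Some T w : add_leaf K T (Some w) = omap Some (T w).
Proof. by rewrite ffunE. Qed.

Lemma add_leaf_None T : add_leaf K T None = omap Some (deepest K T).
Proof. by rewrite ffunE. Qed.

Lemma up_add_leaf T k y : up (add_leaf K T) k (Some y) = omap Some (up T k y).
Proof.
elim: k => // k IH; rewrite !upS IH.
by case: (up T k y) => //= b; rewrite add_leaf_Some.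
Qed.

Lemma mem_desc_add_leaf T w y :
  (Some y \in desc (add_leaf K T) (Some w)) = (y \in desc T w).
Proof.
apply/descP/descP => -[k Hk]; exists k; last by rewrite up_add_leaf Hk.
by move: Hk; rewrite up_add_leaf; case: (up T k y) => //= b [->].
Qed.

Lemma preim_desc_add_leaf T w : Some @^-1: desc (add_leaf K T) (Some w) = desc T w.
Proof. by apply/setP => y; rewrite inE mem_desc_add_leaf. Qed.

Lemma None_desc_add_leaf T z w : deepest K T = Some z ->
  (None \in desc (add_leaf K T) (Some w)) = (z \in desc T w).
Proof.
move=> Hz; rewrite -mem_desc_add_leaf; apply/descP/descP => -[k Hk].
  by case: k Hk => // k; rewrite upSr add_leaf_None Hz => Hk; exists k.
by exists k.+1; rewrite upSr add_leaf_None Hz.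
Qed.

Lemma mem_desc_add_leaf_None T o : (o \in desc (add_leaf K T) None) = (o == None).
Proof.
case: o => [y|]; last by rewrite eqxx desc_refl.
by apply/descP => -[k]; rewrite up_add_leaf; case: (up T k y).
Qed.

Lemma existsb_desc_add_leaf_None T u :
  [exists y in desc (add_leaf K T) None, gK g K (Some u) y] = (u \in K).
Proof.
apply/existsP/idP => [[y]|uK]; first by rewrite mem_desc_add_leaf_None => /andP[/eqP->].
by exists None; rewrite mem_desc_add_leaf_None eqxx.
Qed.

Lemma add_leaf_rooted T r : rooted_at T r -> rooted_at (add_leaf K T) (Some r).
Proof.
case=> Tr reach; split; first by rewrite add_leaf_Some Tr.
have reach' w : exists k, up (add_leaf K T) k (Some w) = Some (Some r).
  by have [k Hk] := reach w; exists k; rewrite up_add_leaf Hk.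
case=> [w|]; first exact: reach'.
have [z Hz] := deepest_exists K_ne T; have [k Hk] := reach' z.
by exists k.+1; rewrite upSr add_leaf_None Hz.
Qed.

Lemma add_leaf_neq_None T o : add_leaf K T o != Some None.
Proof.
by case: o => [w|]; rewrite ?add_leaf_Some ?add_leaf_None; [case: (T w) | case: deepest].
Qed.

Lemma component_add_leaf_child T z c d : search_tree g T -> deepest K T = Some z ->
  T d = Some c -> component g (desc T c :\ c) (desc T d) ->
  component (gK g K) (desc (add_leaf K T) (Some c) :\ Some c)
    (desc (add_leaf K T) (Some d)).
Proof.
move=> stT Hz Td compd; have [zK _] := deepestP Hz.
have S'E : Some @^-1: (desc (add_leaf K T) (Some c) :\ Some c) = desc T c :\ c.
  by rewrite preimset_Some_setD1 preim_desc_add_leaf.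
have C'E := preim_desc_add_leaf T d.
have [zd|zNd] := boolP (z \in desc T d).
  apply: (component_gK_apex compd S'E C'E _ _ zd zK).
  - by rewrite in_setD1 /= (None_desc_add_leaf _ Hz) (desc_trans zd (desc_parent Td)).
  - by rewrite (None_desc_add_leaf _ Hz).
  move=> b bS bK; have [<-//|nzb] := eqVneq z b.
  by case: compd => _ _ _ closedC; apply: closedC zd bS (K_clique zK bK nzb).
apply: (component_gK compd S'E C'E); first by rewrite (None_desc_add_leaf _ Hz).
move=> _; rewrite disjoint_subset; apply/subsetP => a ad; rewrite inE; apply/negP => aK.
by move: zNd; rewrite (desc_trans (desc_deepest K_clique stT Hz aK) ad).
Qed.

Lemma component_add_leaf_None T r z : rooted_at T r -> deepest K T = Some z ->
  component (gK g K) (desc (add_leaf K T) (Some z) :\ Some z) (desc (add_leaf K T) None).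
Proof.
move=> rootT Hz; have [_ dz] := deepestP Hz.
split.
- by apply/set0Pn; exists None; rewrite mem_desc_add_leaf_None.
- apply/subsetP => o; rewrite mem_desc_add_leaf_None => /eqP->.
  by rewrite in_setD1 (None_desc_add_leaf _ Hz) desc_refl.
- by move=> a b; rewrite !mem_desc_add_leaf_None => /eqP-> /eqP->; apply: connect0.
move=> a [b|]; rewrite !mem_desc_add_leaf_None // => /eqP->.
rewrite in_setD1 mem_desc_add_leaf /= => /andP[nbz bz] bK.
by have := depth_desc_lt rootT bz nbz; rewrite dz ltnNge depth_le_lam.
Qed.

Lemma add_leaf_st_at T z c : search_tree g T -> deepest K T = Some z ->
  st_at g T c -> st_at (gK g K) (add_leaf K T) (Some c).
Proof.
move=> stT Hz; have [r [rootT _]] := stT.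
elim/st_at_rec => {}c IH; constructor=> -[d|].
  rewrite add_leaf_Some; case Td: (T d) => [p|] /= Epc; last discriminate.
  case: Epc => Epc; rewrite Epc in Td.
  have [compd std] := IH d Td; split; last exact: std.
  exact: component_add_leaf_child stT Hz Td compd.
rewrite add_leaf_None Hz => -[Ezc]; rewrite -Ezc; split.
  exact: component_add_leaf_None rootT Hz.
by constructor=> o /eqP; rewrite (negbTE (add_leaf_neq_None T o)).
Qed.

Lemma add_leaf_search T : search_tree g T -> search_tree (gK g K) (add_leaf K T).
Proof.
move=> stT; have [r [rootT str]] := stT; have [z Hz] := deepest_exists K_ne T.
by exists (Some r); split; [exact: add_leaf_rooted | exact: add_leaf_st_at Hz str].
Qed.

Lemma existsb_desc_add_leaf T r u v w : rooted_at T r -> T w = Some v -> T v = Some u ->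
  [exists y in desc (add_leaf K T) (Some w), gK g K (Some u) y] =
  [exists y in desc T w, g u y].
Proof.
move=> rootT Tw Tv; have [z Hz] := deepest_exists K_ne T; have [zK _] := deepestP Hz.
apply/existsP/existsP => [[[y|]]|[y]].
- by rewrite mem_desc_add_leaf => Hy; exists y.
- rewrite (None_desc_add_leaf _ Hz) /= => /andP[zw uK]; exists z; rewrite zw /=.
  apply: K_clique => //; apply/eqP => Euz; have := depth_desc rootT zw.
  by rewrite -Euz (depth_parent rootT Tw) (depth_parent rootT Tv); lia.
- by exists (Some y); rewrite mem_desc_add_leaf.
Qed.

Lemma rotate_add_leaf_Some T r u v w : rooted_at T r -> T v = Some u ->
  add_leaf K (rotate g T u v) (Some w) =
  rotate (gK g K) (add_leaf K T) (Some u) (Some v) (Some w).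
Proof.
move=> rootT Tv; rewrite !ffunE /= !(inj_eq (@Some_inj _)).
case: ifP => // _; case: ifP => // _; case Tw: (T w) => [p|] //=.
rewrite !(inj_eq (@Some_inj _)); have [Epv|//] := eqVneq p v.
by rewrite Epv in Tw *; rewrite (existsb_desc_add_leaf rootT Tw Tv) /=; case: ifP.
Qed.

Lemma rotate_add_leaf_None T u v : search_tree g T -> T v = Some u ->
  search_tree g (rotate g T u v) ->
  add_leaf K (rotate g T u v) None = rotate (gK g K) (add_leaf K T) (Some u) (Some v) None.
Proof.
move=> stT Tv stT'; have [z Hz] := deepest_exists K_ne T.
rewrite add_leaf_None (deepest_rotate K_ne K_clique stT Tv stT' Hz) ffunE /=.
rewrite existsb_desc_add_leaf_None add_leaf_None Hz /= !(inj_eq (@Some_inj _)).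
by case: ifP.
Qed.

Lemma insert_lam T v : deepest K T = Some v -> insert T (lam K T).+1 v = add_leaf K T.
Proof.
move=> Hv; have [_ dv] := deepestP Hv.
by apply/ffunP => -[w|]; rewrite !ffunE /= dv ?ltnn // subnn Hv.
Qed.

End AddLeaf.

Section Copies.
Variables (V : finType) (g : rel V) (K : {set V}).
Hypotheses (g_connected : forall a b, connect g a b) (K_ne : K != set0)
  (K_clique : {in K &, forall a b, a != b -> g a b}).

Lemma R0_induces_copy : induces_copy g (gK g K) (R0 g K).
Proof.
apply: (@lift_induces_copy _ _ _ _ (@add_root V)).
- move=> T'; split=> [[T [stT [v [_ _ ->]]]]|[T stT <-]].
    by have [r [rootT _]] := stT; exists T; rewrite // (insert_0 _ rootT).
  exists T; split=> //; have [z Hz] := deepest_exists K_ne T; have [zK dz] := deepestP Hz.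
  by exists z; have [r [rootT _]] := stT; rewrite (insert_0 _ rootT).
- by move=> T; exact: (add_root_search K g_connected).
- by move=> T u v; rewrite add_root_Some; split=> [[]|->].
- by move=> T1 T2 E; apply/ffunP => w; have := E w; rewrite !add_root_Some => -[].
- by move=> T u v w _ _; rewrite (rotate_add_root g K).
- by move=> T u v _ _ _; rewrite (rotate_add_root g K).
move=> T1 T2 u' [v|]; last by rewrite add_root_None.
case: u' => [u|] _ E; first by exists u, v.
have := congr1 (fun T' : ptree (option V) => T' None) E.
by rewrite add_root_None ffunE eqxx.
Qed.

Lemma R1_induces_copy : induces_copy g (gK g K) (R1 g K).
Proof.
apply: (@lift_induces_copy _ _ _ _ (@add_leaf V K)).
- move=> T'; split=> [[T [stT [v [vK dv ->]]]]|[T stT <-]].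
    by exists T; rewrite // (insert_lam (deepest_eq K_ne K_clique stT vK dv)).
  exists T; split=> //; have [z Hz] := deepest_exists K_ne T; have [zK dz] := deepestP Hz.
  by exists z; rewrite (insert_lam Hz).
- by move=> T; exact: (add_leaf_search K_ne K_clique).
- by move=> T u v; rewrite add_leaf_Some; case: (T v) => [p|]; split=> // -[->].
- move=> T1 T2 E; apply/ffunP => w; have := E w; rewrite !add_leaf_Some.
  by case: (T1 w) (T2 w) => [p|] [q|] // [->].
- move=> T u v w [r [rootT _]] Tv.
  exact: (rotate_add_leaf_Some K_ne K_clique w rootT Tv).
- by move=> T u v; exact: (rotate_add_leaf_None K_ne K_clique).
move=> T1 T2 [u|] v' Tv' E; last by have := add_leaf_neq_None K T1 v'; rewrite Tv' eqxx.
case: v' Tv' E => [v|] _ E; first by exists u, v.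
by have := add_leaf_neq_None K T2 (Some u); rewrite E ffunE eqxx.
Qed.

End Copies.

Theorem proposition2p6 (V : finType) (g : rel V) (K : {set V}) :
  symmetric g -> irreflexive g ->
  (forall a b, connect g a b) ->
  K != set0 ->
  {in K &, forall a b, a != b -> g a b} ->
  induces_copy g (gK g K) (R0 g K) /\ induces_copy g (gK g K) (R1 g K).
Proof.
move=> _ _ g_connected K_ne K_clique.
by split; [apply: R0_induces_copy | apply: R1_induces_copy].
Qed.
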